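(* Let $k\ge 2$ and $\Delta\ge 2^{4^k+1}$ be integers, let $Q=\{Q_1,\dots,Q_\Delta\}$ be an arbitrary multiset in $h_1(\Delta)$, and let $P_\infty$ be the element of $Q$ described in the context. Let $\alpha:\{1,\dots,\Delta\}\to\{\mathrm{out},\mathrm{in}\}$ be any function. Let $\mathcal I\subseteq\{1,\dots,\Delta\}$ be the set of indices $i$ with $\{Q_i,P_\infty\}\notin g_1(\Delta)$ and $11\dots1\notin Q_i$. For $\mathcal J\subseteq\mathcal I$, let $N(\mathcal J)\subseteq\{1,\dots,\Delta\}$ be the set of indices $i$ for which there is $j\in\mathcal J$ with $\{Q_i,Q_j\}\in g_1(\Delta)$ and $\alpha(i)\ne\alpha(j)$. Then there is $\mathcal J^*\subseteq\mathcal I$ with $|\mathcal J^*|>|N(\mathcal J^* )|$ such that $\alpha(j)\neq\alpha(i)$ for all $j\in\mathcal J^*$, $i\in N(\mathcal J^* )$.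
   Context: A trit sequence of length $k$ is a word $a_1\dots a_k$ with $a_j\in\{0,1,2\}$; it ''has an $i$ at position $j$'' if $a_j=i$; tritwise addition adds entries position by position. $g_1(\Delta)$ is the set of all 2-element multisets $\{W,X\}$ of sets of trit sequences of length $k$ such that there exist $w\in W$, $x\in X$ whose tritwise sum is $22\dots2$. $h_1(\Delta)$ is the set of all multisets $\{W_1,\dots,W_\Delta\}$ of sets of trit sequences of length $k$ such that (A) for any $w_1\in W_1,\dots,w_\Delta\in W_\Delta$ there is an index $1\le j\le k$ such that the number of $w_i$ with a $2$ at position $j$ is strictly greater than the number of $w_i$ with a $0$ at position $j$, and at most $k$ of the $w_i$ have a $0$ at position $j$; and (B) adding any trit sequence of length $k$ to any single $W_i$ yields a multiset violating (A). For $Q\in h_1(\Delta)$ with $\Delta\ge 2^{4^k+1}$, $P_\infty$ denotes the unique element of $Q$ that has multiplicity at least $\Delta-2^{4^k}$ in $Q$ and contains $11\dots1$ (such an element exists and is unique). *)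

From mathcomp Require Import all_boot.
Set Implicit Arguments. Unset Strict Implicit. Unset Printing Implicit Defensive.

Definition trit (k : nat) := {ffun 'I_k -> 'I_3}.

Definition const_trit (k : nat) (c : 'I_3) : trit k := [ffun _ => c].
Definition all1 (k : nat) : trit k := const_trit k (inord 1).

Definition sums_to_2 (k : nat) (w x : trit k) : bool :=
  [forall j : 'I_k, (val (w j) + val (x j) == 2)%N].

Definition g1 (k : nat) (W X : {set trit k}) : bool :=
  [exists w in W, exists x in X, sums_to_2 w x].

(* A multiset {W_1,...,W_Delta} is represented by an indexed family
   W : 'I_Delta -> {set trit k}. *)

Definition condA (k Delta : nat) (W : 'I_Delta -> {set trit k}) : Prop :=
  forall w : 'I_Delta -> trit k, (forall i, w i \in W i) ->
    exists j : 'I_k,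
      (#|[set i | val (w i j) == 2%N]| > #|[set i | val (w i j) == 0%N]|)%N /\
      (#|[set i | val (w i j) == 0%N]| <= k)%N.

Definition h1 (k Delta : nat) (W : 'I_Delta -> {set trit k}) : Prop :=
  condA W /\
  forall (i : 'I_Delta) (x : trit k), x \notin W i ->
    ~ condA (fun i' => if i' == i then x |: W i else W i').

From mathcomp Require Import all_boot zify perm.
Set Implicit Arguments. Unset Strict Implicit. Unset Printing Implicit Defensive.

(* Suppose no monochromatic J inside I has fewer neighbours of the other
   colour than elements. Splitting by colour, Hall's condition holds on I for
   the relation "g1-adjacent and of the other colour", so Hall's theorem
   matches I injectively into vertices of the other colour; since colours
   alternate along this matching, it can be turned into an involution pairing
   every vertex of I with a g1-adjacent vertex. Each remaining vertex v without
   11...1 lies outside I, hence is g1-adjacent to P_inf, and as the copies of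
   P_inf form a majority (and are left untouched by the first involution), a
   second involution pairs these v with distinct copies of P_inf. Altogether
   every index is either paired with a g1-adjacent index or has 11...1 in its
   set. Picking complementary trit sequences along the pairs and 11...1 at the
   fixed points then gives a choice in which, at every position, the pairing
   maps the 2s injectively onto 0s: this contradicts condition (A). *)

Lemma sums_to_2C k (w x : trit k) : sums_to_2 w x = sums_to_2 x w.
Proof. by apply: eq_forallb => j; rewrite addnC. Qed.

Lemma g1C k (W X : {set trit k}) : g1 W X = g1 X W.
Proof.
by apply/idP/idP => /existsP [w /andP [wW /existsP [x /andP [xX wx]]]];
  apply/existsP; exists x; rewrite xX /=; apply/existsP; exists w;
  rewrite wW sums_to_2C.
Qed.

Lemma all1E k (j : 'I_k) : val (all1 k j) = 1.
Proof. by rewrite ffunE; apply: inordK. Qed.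

Section Hall.
Variables T U : finType.

Definition neighbours (r : T -> U -> bool) (J : {set T}) : {set U} :=
  [set y | [exists x in J, r x y]].

Definition hall_condition (r : T -> U -> bool) (A : {set T}) : Prop :=
  forall J : {set T}, J \subset A -> #|J| <= #|neighbours r J|.

Definition matching (r : T -> U -> bool) (A : {set T}) (f : T -> U) : Prop :=
  {in A, forall x, r x (f x)} /\ {in A &, injective f}.

Lemma neighbours_mem (r : T -> U -> bool) (J : {set T}) x y : x \in J -> r x y -> y \in neighbours r J.
Proof. by move=> xJ rxy; rewrite inE; apply/existsP; exists x; rewrite xJ. Qed.

Lemma neighboursU (r : T -> U -> bool) (J K : {set T}) :
  neighbours r (J :|: K) = neighbours r J :|: neighbours r K.
Proof.
apply/setP => y; rewrite !inE; apply/existsP/orP => [[x /andP [/setUP [] xJK rxy]] | []].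
- by left; apply/existsP; exists x; rewrite xJK.
- by right; apply/existsP; exists x; rewrite xJK.
- by case/existsP => x /andP [xJ rxy]; exists x; rewrite inE xJ.
- by case/existsP => x /andP [xK rxy]; exists x; rewrite inE xK orbT.
Qed.

Lemma neighbours_restrict (r : T -> U -> bool) (X : {set U}) (J : {set T}) :
  neighbours (fun x y => r x y && (y \notin X)) J = neighbours r J :\: X.
Proof.
apply/setP => y; rewrite !inE; case: (y \in X) => /=; last first.
  by apply: eq_existsb => x; rewrite andbT.
by apply/negbTE/existsPn => x; rewrite !andbF.
Qed.

Lemma matching_glue (r : T -> U -> bool) (X : {set U}) (A J : {set T}) f1 f2 :
  J \subset A -> matching r J f1 -> {in J, forall x, f1 x \in X} ->
  matching (fun x y => r x y && (y \notin X)) (A :\: J) f2 ->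
  matching r A (fun x => if x \in J then f1 x else f2 x).
Proof.
move=> sJA [f1r f1inj] f1X [f2r f2inj].
have AJ x : x \in A -> x \notin J -> x \in A :\: J by rewrite inE => -> ->.
split=> [x xA | x y xA yA] /=.
  by case: ifP => [/f1r // | /negbT/(AJ x xA)/f2r/andP []].
have f2X z : z \in A -> z \notin J -> f2 z \notin X.
  by move=> zA /(AJ z zA)/f2r/andP [].
case xJ: (x \in J); case yJ: (y \in J) => fxy.
- exact: f1inj.
- by move: (f2X y yA (negbT yJ)); rewrite -fxy f1X.
- by move: (f2X x xA (negbT xJ)); rewrite fxy f1X.
- by apply: f2inj; rewrite ?AJ ?xJ ?yJ.
Qed.

Lemma hall_condition_tight (r : T -> U -> bool) (A J : {set T}) :
  hall_condition r A -> J \subset A -> #|neighbours r J| <= #|J| ->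
  hall_condition (fun x y => r x y && (y \notin neighbours r J)) (A :\: J).
Proof.
move=> hallA sJA tightJ K sK; rewrite neighbours_restrict.
have KJ0 : K :&: J = set0.
  apply/setP => x; rewrite !inE; apply/negbTE; apply/andP => -[/(subsetP sK)].
  by rewrite inE => /andP [/negbTE ->].
have sKJA : K :|: J \subset A by rewrite subUset sJA (subset_trans sK) ?subsetDl.
have := hallA _ sKJA; rewrite neighboursU cardsU cardsU KJ0 cards0 cardsD.
have := subset_leq_card (subsetIr (neighbours r K) (neighbours r J)); lia.
Qed.

Lemma hall_condition_surplus (r : T -> U -> bool) (A : {set T}) a (b : U) :
  (forall J : {set T}, J \subset A -> J != set0 -> J != A -> #|J| < #|neighbours r J|) ->
  a \in A ->
  hall_condition (fun x y => r x y && (y \notin [set b])) (A :\ a).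
Proof.
move=> surplus aA K sK; rewrite neighbours_restrict.
have [->|K0] := eqVneq K set0; first by rewrite cards0.
have sKA : K \subset A by apply: subset_trans sK (subD1set A a).
have KA : K != A by apply: contraTneq aA => <-; apply/negP => /(subsetP sK);
  rewrite !inE eqxx.
have := surplus K sKA K0 KA; rewrite cardsD.
have := subset_leq_card (subsetIr (neighbours r K) [set b]); rewrite cards1; lia.
Qed.

(* [u0] is only a default value of the matching outside [A]. *)
Theorem hall_marriage (u0 : U) (r : T -> U -> bool) (A : {set T}) :
  hall_condition r A -> exists f, matching r A f.
Proof.
have [n] := ubnP #|A|; elim: n => // n IHn in r A *; rewrite ltnS => cardA hallA.
have [-> | [a aA]] := set_0Vmem A.
  by exists (fun=> u0); split=> x; rewrite inE.
have [/existsP [J /and4P [sJA J0 JA tightJ]] | /existsPn noTight] :=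
  boolP [exists J : {set T},
          [&& J \subset A, J != set0, J != A & #|neighbours r J| <= #|J|]].
- have ltJA : #|J| < #|A| by rewrite proper_card // properEneq JA.
  have ltDA : #|A :\: J| < #|A| by rewrite cardsDS // -card_gt0 in J0 *; lia.
  have [f1 f1m] := IHn r J (leq_trans ltJA cardA) (fun K sK => hallA K (subset_trans sK sJA)).
  have [f2 f2m] := IHn _ _ (leq_trans ltDA cardA) (hall_condition_tight hallA sJA tightJ).
  exists (fun x => if x \in J then f1 x else f2 x).
  by apply: matching_glue f2m => // x xJ; apply: neighbours_mem xJ (f1m.1 x xJ).
- have surplus (J : {set T}) : J \subset A -> J != set0 -> J != A -> #|J| < #|neighbours r J|.
    by move=> sJA J0 JA; have := noTight J; rewrite sJA J0 JA /= -ltnNge.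
  have [b] : exists b, b \in neighbours r [set a].
    by apply/set0Pn; rewrite -card_gt0 -(cards1 a) hallA // sub1set.
  rewrite inE => /existsP [a' /andP [/set1P -> rab]].
  have ltDA : #|A :\ a| < #|A| by rewrite (cardsD1 a A) aA.
  have [f2 f2m] := IHn _ _ (leq_trans ltDA cardA) (hall_condition_surplus b surplus aA).
  exists (fun x => if x \in [set a] then b else f2 x).
  apply: (matching_glue (X := [set b])) f2m; rewrite ?sub1set //.
    by split=> [x /set1P -> // | x y /set1P -> /set1P ->].
  by move=> x _; apply: set11.
Qed.

Lemma hall_condition_card (A : {set T}) (B : {set U}) :
  #|A| <= #|B| -> hall_condition (fun _ y => y \in B) A.
Proof.
move=> AB J sJA; have [->|[x xJ]] := set_0Vmem J; first by rewrite cards0.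
have -> : neighbours (fun _ y => y \in B) J = B.
  by apply/setP => y; rewrite inE; apply/existsP/idP => [[? /andP []] | yB];
    last by exists x; rewrite xJ.
exact: leq_trans (subset_leq_card sJA) AB.
Qed.

End Hall.

Lemma hall_condition_bipartite (T : finType) (r : rel T) (C A : {set T}) :
  (forall x y, r x y -> (x \in C) != (y \in C)) ->
  hall_condition r (A :&: C) -> hall_condition r (A :\: C) ->
  hall_condition r A.
Proof.
move=> rC hallC hallD J sJA.
have NCD : neighbours r (J :&: C) :&: neighbours r (J :\: C) = set0.
  apply/setP => y; rewrite !inE; apply/negbTE/negP.
  case/andP => /existsP [x /andP [/setIP [_ xC] /rC xy]].
  case/existsP => z /andP [/setDP [_ /negbTE zC] /rC zy].
  by move: xy zy; rewrite xC zC; case: (y \in C).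
have -> : neighbours r J = neighbours r (J :&: C) :|: neighbours r (J :\: C).
  by rewrite -neighboursU setID.
rewrite cardsU NCD cards0 -{1}(cardsID C J).
have := hallC _ (setSI C sJA); have := hallD _ (setSD C sJA); lia.
Qed.

Lemma involutive_merge (T : eqType) (sg tau : T -> T) :
  involutive sg -> involutive tau -> (forall x, tau x != x -> sg x = x) ->
  involutive (fun x => if sg x == x then tau x else sg x).
Proof.
move=> sgK tauK disj x.
have [sgx | sgx] := eqVneq (sg x) x; last by rewrite sgK eq_sym (negbTE sgx).
have [taux | taux] := eqVneq (tau x) x.
  by rewrite taux sgx eqxx.
by rewrite disj ?eqxx ?tauK // eq_sym.
Qed.

Section AlternatingInjection.
Variables (T : finType) (adj : rel T) (s : T -> bool).
Hypothesis adjC : symmetric adj.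

Lemma alternating_bijection_involution (I : {set T}) (F : T -> T) :
  I \subset F @: I -> {in I &, injective F} ->
  {in I, forall v, adj v (F v) && (s (F v) != s v)} ->
  exists sg : T -> T, [/\ involutive sg, {in I, forall v, sg v != v},
    forall v, sg v != v -> adj v (sg v) & forall v, v \notin I -> sg v = v].
Proof.
move=> sIF Finj hF.
have FII : F @: I = I by apply/eqP; rewrite eq_sym eqEcard sIF leq_imset_card.
have FI v : v \in I -> F v \in I by move=> vI; rewrite -FII imset_f.
have sF v : v \in I -> s (F v) = ~~ s v by move/hF/andP => [_]; case: (s v); case: (s _).
pose g x := odflt x [pick y in I | F y == x].
have gP x : x \in I -> g x \in I /\ F (g x) = x.
  rewrite /g; case: pickP => [y /andP [yI /eqP] // | none].
  by rewrite -FII => /imsetP [y yI xFy]; move: (none y); rewrite yI xFy eqxx.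
exists (fun x => if x \in I then (if s x then F x else g x) else x); split.
- move=> x; case xI: (x \in I); last by rewrite xI.
  case sx: (s x).
    have [gFI gF] := gP _ (FI x xI).
    by rewrite FI // sF // sx; apply: Finj.
  have [gI gF] := gP x xI.
  by rewrite gI -[s (g x)]negbK -sF // gF sx.
- move=> v vI; rewrite vI; have [gI gF] := gP v vI.
  have Fgv := hF _ gI; rewrite gF in Fgv.
  by case: (s v); [move: (hF v vI) | move: Fgv];
    case/andP => _; apply: contraNneq => ->.
- move=> x; case xI: (x \in I); last by rewrite eqxx.
  case: (s x) => _; first by case/andP: (hF x xI).
  by have [gI gF] := gP x xI; rewrite adjC; case/andP: (hF _ gI); rewrite gF.
- by move=> x /negbTE ->.
Qed.

Lemma remove_unmatched_pair (I : {set T}) (F : T -> T) v :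
  {in I &, injective F} -> v \in I -> v \notin F @: I ->
  [/\ I :\ v :\ F v \subset I, #|I :\ v :\ F v| < #|I|,
      v \notin (I :\ v :\ F v) :|: F @: (I :\ v :\ F v)
    & F v \notin (I :\ v :\ F v) :|: F @: (I :\ v :\ F v)].
Proof.
move=> Finj vI vF; set I' := I :\ v :\ F v.
have sI'I : I' \subset I := subset_trans (subD1set _ _) (subD1set I v).
split=> //.
- rewrite /I'; have := subset_leq_card (subD1set (I :\ v) (F v)); have := cardsD1 v I.
  by rewrite vI; lia.
- rewrite in_setU !inE eqxx andbF /=.
  by apply: contra vF; apply/subsetP/imsetS.
- rewrite in_setU !inE eqxx /=; apply/imsetP => -[w wI' Fvw].
  have wI := subsetP sI'I w wI'.
  by move: wI'; rewrite -(Finj _ _ vI wI Fvw) !inE eqxx andbF.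
Qed.

Lemma alternating_injection_involution (I : {set T}) (F : T -> T) :
  {in I &, injective F} -> {in I, forall v, adj v (F v) && (s (F v) != s v)} ->
  exists sg : T -> T, [/\ involutive sg, {in I, forall v, sg v != v},
    forall v, sg v != v -> adj v (sg v) &
    forall v, v \notin I :|: F @: I -> sg v = v].
Proof.
have [n] := ubnP #|I|; elim: n => // n IHn in I *; rewrite ltnS => cardI Finj hF.
have [/existsP [v /andP [vI vF]] | /existsPn allF] := boolP [exists v in I, v \notin F @: I];
  last first.
  have sIF : I \subset F @: I by apply/subsetP => v vI; move: (allF v); rewrite vI negbK.
  have [sg [sgK sgI sgadj sgfix]] := alternating_bijection_involution sIF Finj hF.
  by exists sg; split=> // v; rewrite in_setU negb_or => /andP [/sgfix].
(* Pair [v] with [F v] and recurse on the rest of [I]. *)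
have [sI'I ltI' vI' uI'] := remove_unmatched_pair Finj vI vF.
set u := F v in uI' *; have /andP [adjvu suv] := hF v vI.
have uv : u != v by apply: contraNneq suv => uv; rewrite -/u uv.
have [sg' [sg'K sg'I' sg'adj sg'fix]] :=
  IHn _ (leq_trans ltI' cardI) (sub_in2 (subsetP sI'I) Finj) (sub_in1 (subsetP sI'I) hF).
have disj x : sg' x != x -> tperm v u x = x.
  by move=> sg'x; apply: tpermD; apply: contraNneq sg'x => <-; rewrite sg'fix.
exists (fun x => if tperm v u x == x then sg' x else tperm v u x); split.
- exact: involutive_merge (@tpermK _ v u) sg'K disj.
- move=> x xI; case: tpermP => [-> | -> | xv xu]; rewrite ?eqxx.
  + by rewrite (negbTE uv).
  + by rewrite (eq_sym v u) (negbTE uv) /= eq_sym.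
  + by apply: sg'I'; rewrite !inE xI andbT; apply/andP; split; apply/eqP.
- move=> x; case: tpermP => [-> | -> | _ _]; rewrite ?eqxx.
  + by rewrite (negbTE uv) adjvu.
  + by rewrite (eq_sym v u) (negbTE uv) adjC adjvu.
  + exact: sg'adj.
- move=> x xIF; have := xIF; rewrite in_setU => /norP [xI xF].
  have xv : x != v by apply: contraNneq xI => ->.
  have xu : x != u by apply: contraNneq xF => ->; apply: imset_f.
  rewrite tpermD 1?eq_sym // eqxx; apply: sg'fix; apply: contra xIF.
  by apply/subsetP/setUSS/imsetS.
Qed.

End AlternatingInjection.

Section ComplementaryChoice.
Variables (k : nat) (T : finType) (rho : T -> T).
Hypothesis rhoK : involutive rho.

Lemma exists_complementary_choice (Q : T -> {set trit k}) :
  (forall x, rho x != x -> g1 (Q x) (Q (rho x))) ->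
  (forall x, rho x = x -> all1 k \in Q x) ->
  exists w : T -> trit k, [/\ forall x, w x \in Q x,
    forall x, rho x != x -> sums_to_2 (w x) (w (rho x)) &
    forall x, rho x = x -> w x = all1 k].
Proof.
move=> adjQ fixQ.
pose good x (p : trit k * trit k) := [&& p.1 \in Q x, p.2 \in Q (rho x) & sums_to_2 p.1 p.2].
pose pair x := odflt (all1 k, all1 k) [pick p | good x p].
have pairP x : rho x != x -> good x (pair x).
  move/adjQ => /existsP [a /andP [aQ /existsP [b /andP [bQ ab]]]].
  rewrite /pair; case: pickP => [p // | none].
  by move: (none (a, b)); rewrite /good /= aQ bQ ab.
(* Each pair is read from its endpoint of smaller rank. *)
pose w x := if rho x == x then all1 k
  else if enum_rank x < enum_rank (rho x) then (pair x).1 else (pair (rho x)).2.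
have wpair x : rho x != x -> enum_rank x < enum_rank (rho x) ->
    (w x, w (rho x)) = pair x.
  move=> rx lt; rewrite /w rhoK (negbTE rx) eq_sym (negbTE rx) lt ltnNge ltnW //.
  by case: (pair x).
have wgood x : rho x != x ->
    [&& w x \in Q x, w (rho x) \in Q (rho x) & sums_to_2 (w x) (w (rho x))].
  move=> rx; case: (ltngtP (enum_rank x) (enum_rank (rho x))) => [lt | gt | /val_inj/enum_rank_inj eq].
  - by have := pairP x rx; rewrite -(wpair x rx lt).
  - have rrx : rho (rho x) != rho x by rewrite rhoK eq_sym.
    move: (pairP _ rrx); rewrite -(wpair _ rrx) ?rhoK // /good /= rhoK.
    by case/and3P => -> -> /=; rewrite sums_to_2C.
  - by rewrite -eq eqxx in rx.
exists w; split.
- move=> x; have [rx | rx] := eqVneq (rho x) x.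
    by rewrite /w rx eqxx; apply: fixQ.
  by case/and3P: (wgood x rx).
- by move=> x /wgood /and3P [].
- by move=> x rx; rewrite /w rx eqxx.
Qed.

Lemma card_twos_le_card_zeros (w : T -> trit k) (j : 'I_k) :
  (forall x, rho x != x -> sums_to_2 (w x) (w (rho x))) ->
  (forall x, rho x = x -> w x = all1 k) ->
  #|[set x | val (w x j) == 2]| <= #|[set x | val (w x j) == 0]|.
Proof.
move=> wsum wfix.
have sub : rho @: [set x | val (w x j) == 2] \subset [set x | val (w x j) == 0].
  apply/subsetP => y /imsetP [x]; rewrite !inE => /eqP wx2 ->.
  have [rx | rx] := eqVneq (rho x) x; first by rewrite wfix // all1E in wx2.
  by move: (wsum x rx) => /forallP /(_ j); rewrite wx2; lia.
by have := subset_leq_card sub; rewrite card_imset //; apply: can_inj rhoK.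
Qed.

End ComplementaryChoice.

Lemma condA_no_complementary_involution k Delta (Q : 'I_Delta -> {set trit k})
    (rho : 'I_Delta -> 'I_Delta) :
  condA Q -> involutive rho ->
  (forall x, rho x != x -> g1 (Q x) (Q (rho x))) ->
  (forall x, rho x = x -> all1 k \in Q x) -> False.
Proof.
move=> hA rhoK adjQ fixQ.
have [w [wQ wsum wfix]] := exists_complementary_choice rhoK adjQ fixQ.
have [j [lt _]] := hA w wQ.
by have := card_twos_le_card_zeros rhoK j wsum wfix; rewrite leqNgt lt.
Qed.

Section PinfMajority.
Variables (k Delta : nat) (Q : 'I_Delta -> {set trit k}) (Pinf : {set trit k}).
Variable alpha : 'I_Delta -> bool.
Hypothesis all1_Pinf : all1 k \in Pinf.
Let B := [set i | Q i == Pinf].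
Hypothesis B_majority : #|~: B| <= #|B|.
Let I := [set i | ~~ g1 (Q i) Pinf & all1 k \notin Q i].

Lemma complementary_involution_of_matching (i0 : 'I_Delta) F :
  matching (fun j i => g1 (Q i) (Q j) && (alpha i != alpha j)) I F ->
  exists rho, [/\ involutive rho,
    forall x, rho x != x -> g1 (Q x) (Q (rho x)) &
    forall x, rho x = x -> all1 k \in Q x].
Proof.
move=> [Fr Finj].
have adjC : symmetric (fun x y => g1 (Q x) (Q y)) by move=> x y; apply: g1C.
have FP : {in I, forall j, g1 (Q j) (Q (F j)) && (alpha (F j) != alpha j)}.
  by move=> j /Fr; rewrite g1C.
have [sg [sgK sgI sgadj sgfix]] := alternating_injection_involution adjC Finj FP.
have sgB : {in B, forall i, sg i = i}.
  move=> i; rewrite inE => /eqP Qi; apply: sgfix; rewrite in_setU negb_or.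
  rewrite inE Qi all1_Pinf andbF /=; apply/negP => /imsetP [j jI ij].
  by move: jI (FP j jI); rewrite -ij Qi inE => /andP [/negbTE -> _].
pose I2 := [set v | (all1 k \notin Q v) && (sg v == v)].
have I2B : I2 \subset ~: B.
  by apply/subsetP => v; rewrite !inE => /andP [+ _]; apply: contra => /eqP ->.
have I2g1 v : v \in I2 -> g1 (Q v) Pinf.
  rewrite inE => /andP [nall /eqP sgv].
  have : v \notin I by apply/negP => /sgI; rewrite sgv eqxx.
  by rewrite inE nall andbT negbK.
have [h [hB hinj]] :=
  hall_marriage i0 (hall_condition_card (leq_trans (subset_leq_card I2B) B_majority)).
have hP : {in I2, forall v, g1 (Q v) (Q (h v)) && ((h v \in B) != (v \in B))}.
  move=> v vI2; have /I2g1 g1v := vI2.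
  move: (hB v vI2) (subsetP I2B v vI2); rewrite !inE => /eqP -> /negbTE ->.
  by rewrite g1v eqxx.
have [tau [tauK tauI2 tauadj taufix]] := alternating_injection_involution adjC hinj hP.
have disj x : tau x != x -> sg x = x.
  apply: contraNeq => sgx; apply/eqP/taufix.
  rewrite in_setU negb_or inE (negbTE sgx) andbF /=.
  by apply: contra sgx => /imsetP [v /hB xB ->]; rewrite sgB.
exists (fun x => if sg x == x then tau x else sg x); split.
- exact: involutive_merge.
- by move=> x; have [_ | sgx _] := eqVneq (sg x) x; [apply: tauadj | apply: sgadj].
- move=> x; have [sgx taux | sgx /eqP] := eqVneq (sg x) x; last by rewrite (negbTE sgx).
  apply/negPn/negP => nall.
  have xI2 : x \in I2 by rewrite inE nall sgx eqxx.
  by move: (tauI2 x xI2); rewrite taux eqxx.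
Qed.

End PinfMajority.

Theorem lemma6 (k Delta : nat) (Q : 'I_Delta -> {set trit k})
  (Pinf : {set trit k}) (alpha : 'I_Delta -> bool) :
  (2 <= k)%N ->
  (2 ^ (4 ^ k + 1) <= Delta)%N ->
  h1 Q ->
  (* Pinf is an element of Q of multiplicity >= Delta - 2^(4^k) containing 11..1 *)
  (Delta - 2 ^ (4 ^ k) <= #|[set i | Q i == Pinf]|)%N ->
  all1 k \in Pinf ->
  let I := [set i | ~~ g1 (Q i) Pinf & all1 k \notin Q i] in
  let N := fun J : {set 'I_Delta} =>
    [set i | [exists j in J, g1 (Q i) (Q j) && (alpha i != alpha j)]] in
  exists2 J : {set 'I_Delta}, J \subset I &
    (#|N J| < #|J|)%N /\
    (forall j i, j \in J -> i \in N J -> alpha j != alpha i).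
Proof.
move=> _ hD [condAQ _] hB all1_Pinf I N.
pose C := [set i | alpha i].
have [/existsP [J /andP [monoJ defJ]] | /existsPn noDef] := boolP
  [exists J : {set 'I_Delta}, ((J \subset I :&: C) || (J \subset I :\: C)) && (#|N J| < #|J|)].
  exists J; first by case/orP: monoJ => /subset_trans; apply; rewrite ?subsetIl ?subsetDl.
  split=> // j i jJ /[!inE] /existsP [j' /andP [j'J /andP [_ ne]]].
  have same : alpha j = alpha j'.
    by case/orP: monoJ => /subsetP sJ; move: (sJ j jJ) (sJ j' j'J); rewrite !inE;
      [move=> /andP [_ ->] /andP [_ ->] | move=> /andP [/negbTE -> _] /andP [/negbTE -> _]].
  by rewrite same eq_sym.
exfalso.
have i0 : 'I_Delta by exists 0; apply: leq_trans hD; rewrite expn_gt0.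
have hallI : hall_condition (fun j i => g1 (Q i) (Q j) && (alpha i != alpha j)) I.
  apply: (hall_condition_bipartite (C := C)) => [x y /andP [_] | J sJ | J sJ].
  - by rewrite !inE eq_sym.
  - by rewrite leqNgt; apply: contraNN (noDef J) => ltJ; rewrite sJ.
  - by rewrite leqNgt; apply: contraNN (noDef J) => ltJ; rewrite sJ orbT.
have [F matchF] := hall_marriage i0 hallI.
have B_majority : #|~: [set i | Q i == Pinf]| <= #|[set i | Q i == Pinf]|.
  move: (cardsC [set i | Q i == Pinf]) hB hD; rewrite card_ord expnD expn1; lia.
have [rho [rhoK rhoadj rhofix]] :=
  complementary_involution_of_matching all1_Pinf B_majority i0 matchF.
exact: condA_no_complementary_involution condAQ rhoK rhoadj rhofix.
Qed.
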